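(* Let $\mathfrak p\in\mathbb R[x,y,z]$ be a polynomial of total degree at most $3$ and let $\mathcal V(\nabla\mathfrak p)=\{u\in\mathbb R^3:\nabla\mathfrak p(u)=0\}$. Let $m\in\mathcal V(\nabla\mathfrak p)$ be a local extremum of $\mathfrak p$ and let $\mathcal C\subset\mathcal V(\nabla\mathfrak p)$ be a path-connected component containing $m$. Then $\mathrm{aff}(\mathcal C)\subset\mathcal V(\nabla\mathfrak p)$.
   Context: $\mathrm{aff}$ denotes affine hull. *)

From Stdlib Require Import Reals Lra List.
Open Scope R_scope.

Definition R3 : Type := (R * R * R)%type.

Definition dist3 (u v : R3) : R :=
  let '(x1, y1, z1) := u in let '(x2, y2, z2) := v in
  sqrt ((x1 - x2) ^ 2 + (y1 - y2) ^ 2 + (z1 - z2) ^ 2).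

(* A real polynomial in x,y,z of total degree <= 3 is given by its
   coefficients c i j k (coefficient of x^i y^j z^k), with
   c i j k = 0 whenever i + j + k > 3; only i,j,k <= 3 can then be nonzero. *)
Definition deg_le3 (c : nat -> nat -> nat -> R) : Prop :=
  forall i j k : nat, (3 < i + j + k)%nat -> c i j k = 0.

Definition sum3 (f : nat -> nat -> nat -> R) : R :=
  sum_f_R0 (fun i => sum_f_R0 (fun j => sum_f_R0 (fun k => f i j k) 3) 3) 3.

Definition peval (c : nat -> nat -> nat -> R) (u : R3) : R :=
  let '(x, y, z) := u in
  sum3 (fun i j k => c i j k * x ^ i * y ^ j * z ^ k).

(* Partial derivatives of the polynomial (formal = analytic derivatives). *)
Definition pdx (c : nat -> nat -> nat -> R) (u : R3) : R :=
  let '(x, y, z) := u in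
  sum3 (fun i j k => c i j k * INR i * x ^ (i - 1) * y ^ j * z ^ k).
Definition pdy (c : nat -> nat -> nat -> R) (u : R3) : R :=
  let '(x, y, z) := u in
  sum3 (fun i j k => c i j k * x ^ i * (INR j * y ^ (j - 1)) * z ^ k).
Definition pdz (c : nat -> nat -> nat -> R) (u : R3) : R :=
  let '(x, y, z) := u in
  sum3 (fun i j k => c i j k * x ^ i * y ^ j * (INR k * z ^ (k - 1))).

Definition Vgrad (c : nat -> nat -> nat -> R) (u : R3) : Prop :=
  pdx c u = 0 /\ pdy c u = 0 /\ pdz c u = 0.

Definition local_extremum (c : nat -> nat -> nat -> R) (m : R3) : Prop :=
  (exists eps, 0 < eps /\ forall u, dist3 u m < eps -> peval c m <= peval c u) \/
  (exists eps, 0 < eps /\ forall u, dist3 u m < eps -> peval c u <= peval c m).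

Definition path_in (S : R3 -> Prop) (a b : R3) : Prop :=
  exists gamma : R -> R3,
    gamma 0 = a /\ gamma 1 = b /\
    (forall t, 0 <= t <= 1 -> S (gamma t)) /\
    (forall t, 0 <= t <= 1 -> forall eps, 0 < eps ->
       exists delta, 0 < delta /\
         forall s, 0 <= s <= 1 -> Rabs (s - t) < delta ->
           dist3 (gamma s) (gamma t) < eps).

Definition path_component (S : R3 -> Prop) (m : R3) (u : R3) : Prop :=
  S u /\ path_in S m u.

Definition add3 (u v : R3) : R3 :=
  let '(x1, y1, z1) := u in let '(x2, y2, z2) := v in (x1 + x2, y1 + y2, z1 + z2).
Definition scal3 (a : R) (u : R3) : R3 :=
  let '(x, y, z) := u in (a * x, a * y, a * z).

Definition aff (C : R3 -> Prop) (u : R3) : Prop :=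
  exists l : list (R * R3),
    Forall (fun wv => C (snd wv)) l /\
    fold_right (fun wv s => fst wv + s) 0 l = 1 /\
    u = fold_right (fun wv s => add3 (scal3 (fst wv) (snd wv)) s) (0, 0, 0) l.

From Stdlib Require Import Reals Lra Lia Psatz List Classical.
From Stdlib Require Import FunctionalExtensionality PropExtensionality.
Import ListNotations.
Open Scope R_scope.

(* Let m be a local minimum (for a maximum, replace p by -p) and expand the cubic at m:
   p(m + w) = p(m) + Q(w) + K(w), with Q the Hessian form at m and K the cubic part of p.
   Minimality makes Q positive semidefinite and forces K = 0 on N = {Q = 0}, so N is a
   linear subspace and p is constant on m + N.  Then m + t n (n in N, t small) is again a
   local minimum, hence critical, and since grad p is quadratic along the line m + t n this
   makes all of m + N critical.  Conversely, if a is in m + N and a critical point u is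
   close to a, comparing the expansions of p(u) at m and at a with p(m + 2(u - a)) >= p(m)
   puts u in m + N.  So the path component of m, and with it its affine hull, lies in the
   affine space m + N, which consists of critical points. *)

Definition sub3 (u v : R3) : R3 := add3 u (scal3 (-1) v).

Definition norm3 (w : R3) : R := let '(x, y, z) := w in sqrt (x ^ 2 + y ^ 2 + z ^ 2).

(* Splits into coordinates every R3-valued atom of the goal (variables, but also terms such
   as [comb3 l]), leaving the vector operations to be unfolded. *)
Ltac destruct_R3 :=
  repeat match goal with
         |- context [?v] =>
           match type of v with R3 =>
             lazymatch v with
             | add3 _ _ => fail | scal3 _ _ => fail | sub3 _ _ => fail
             | _ => destruct v as [[? ?] ?]
             end
           end
         end.

Ltac r3_ring :=
  destruct_R3; unfold sub3, add3, scal3; cbv beta iota;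
  apply pair_equal_spec; split; [apply pair_equal_spec; split |]; ring.

Lemma add3_sub3 (b u : R3) : add3 b (sub3 u b) = u.
Proof. r3_ring. Qed.

Lemma norm3_nonneg (w : R3) : 0 <= norm3 w.
Proof. destruct w as [[x y] z]. apply sqrt_pos. Qed.

Lemma norm3_scal3 (a : R) (w : R3) : norm3 (scal3 a w) = Rabs a * norm3 w.
Proof.
  destruct w as [[x y] z]. unfold norm3, scal3.
  rewrite <- sqrt_Rsqr_abs, <- sqrt_mult by (unfold Rsqr; nra).
  f_equal. unfold Rsqr. ring.
Qed.

Lemma norm3_triangle (v w : R3) : norm3 (add3 v w) <= norm3 v + norm3 w.
Proof.
  destruct v as [[x y] z], w as [[x' y'] z']. unfold norm3, add3.
  set (A := x ^ 2 + y ^ 2 + z ^ 2). set (B := x' ^ 2 + y' ^ 2 + z' ^ 2).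
  assert (HA : 0 <= A) by (unfold A; nra). assert (HB : 0 <= B) by (unfold B; nra).
  assert (cauchy_schwarz : x * x' + y * y' + z * z' <= sqrt A * sqrt B).
  { rewrite <- sqrt_mult by assumption.
    apply Rsqr_incr_0_var; [| apply sqrt_pos].
    rewrite Rsqr_sqrt by (apply Rmult_le_pos; assumption).
    unfold Rsqr, A, B.
    pose proof (pow2_ge_0 (x * y' - y * x')). pose proof (pow2_ge_0 (x * z' - z * x')).
    pose proof (pow2_ge_0 (y * z' - z * y')). nra. }
  rewrite <- (sqrt_pow2 (sqrt A + sqrt B)) by (pose proof (sqrt_pos A); pose proof (sqrt_pos B); lra).
  apply sqrt_le_1_alt.
  replace ((sqrt A + sqrt B) ^ 2) with (sqrt A * sqrt A + sqrt B * sqrt B + 2 * (sqrt A * sqrt B)) by ring.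
  rewrite !sqrt_sqrt by assumption.
  replace ((x + x') ^ 2 + (y + y') ^ 2 + (z + z') ^ 2)
    with (A + B + 2 * (x * x' + y * y' + z * z')) by (unfold A, B; ring).
  lra.
Qed.

Lemma dist3_norm3 (u v : R3) : dist3 u v = norm3 (sub3 u v).
Proof.
  destruct u as [[x1 y1] z1], v as [[x2 y2] z2]. unfold dist3, norm3, sub3, add3, scal3.
  f_equal. ring.
Qed.

Lemma dist3_add3_l (b w : R3) : dist3 (add3 b w) b = norm3 w.
Proof. rewrite dist3_norm3. f_equal. r3_ring. Qed.

Lemma dist3_sym (u v : R3) : dist3 u v = dist3 v u.
Proof.
  rewrite !dist3_norm3. replace (sub3 u v) with (scal3 (-1) (sub3 v u)) by r3_ring.
  rewrite norm3_scal3, Rabs_left by lra. ring.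
Qed.

Lemma dist3_triangle (u v w : R3) : dist3 u w <= dist3 u v + dist3 v w.
Proof.
  rewrite !dist3_norm3. replace (sub3 u w) with (add3 (sub3 u v) (sub3 v w)) by r3_ring.
  apply norm3_triangle.
Qed.

Lemma nonneg_of_linear_lower_bound (a M d : R) : 0 < d ->
  (forall s, 0 < s < d -> 0 <= a + M * s) -> 0 <= a.
Proof.
  intros Hd H. apply Rnot_lt_le. intros Ha.
  pose proof (Rabs_pos M) as HM. pose proof (Rle_abs M) as HM'.
  set (s := Rmin (d / 2) (- a / (2 * (Rabs M + 1)))).
  assert (Hs_d : s <= d / 2) by apply Rmin_l.
  assert (Hs_pos : 0 < s) by (apply Rmin_pos; [lra | apply Rdiv_lt_0_compat; lra]).
  assert (Hs_a : s * (Rabs M + 1) <= - a / 2).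
  { replace (- a / 2) with (- a / (2 * (Rabs M + 1)) * (Rabs M + 1)) by (field; lra).
    apply Rmult_le_compat_r; [lra | apply Rmin_r]. }
  specialize (H s ltac:(lra)). nra.
Qed.

Lemma cubic_lowest_coef_nonneg (a b k d : R) : 0 < d ->
  (forall s, 0 < s < d -> 0 <= a * s + b * s ^ 2 + k * s ^ 3) -> 0 <= a.
Proof.
  intros Hd H.
  apply (nonneg_of_linear_lower_bound a (Rabs b + Rabs k) (Rmin d 1)); [apply Rmin_pos; lra |].
  intros s Hs. pose proof (Rmin_l d 1). pose proof (Rmin_r d 1).
  specialize (H s ltac:(lra)).
  assert (0 <= a + b * s + k * s ^ 2).
  { apply (Rmult_le_reg_l s); [lra |]. nra. }
  pose proof (Rle_abs b) as Hb. pose proof (Rle_abs k) as Hk.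
  assert (s ^ 2 <= s) by nra.
  assert (b * s <= Rabs b * s) by (apply Rmult_le_compat_r; lra).
  assert (k * s ^ 2 <= Rabs k * s ^ 2) by (apply Rmult_le_compat_r; nra).
  assert (Rabs k * s ^ 2 <= Rabs k * s) by (apply Rmult_le_compat_l; [apply Rabs_pos | lra]).
  lra.
Qed.

Lemma cubic_nonneg_near0 (a b k d : R) : 0 < d ->
  (forall s, Rabs s < d -> 0 <= a * s + b * s ^ 2 + k * s ^ 3) ->
  a = 0 /\ 0 <= b /\ (b = 0 -> k = 0).
Proof.
  intros Hd H.
  assert (Hpos : forall s, 0 < s < d -> 0 <= a * s + b * s ^ 2 + k * s ^ 3)
    by (intros s Hs; apply H; rewrite Rabs_right; lra).
  assert (Hneg : forall s, 0 < s < d -> 0 <= - a * s + b * s ^ 2 + - k * s ^ 3).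
  { intros s Hs. specialize (H (- s)). rewrite Rabs_Ropp, Rabs_right in H by lra.
    specialize (H ltac:(lra)). nra. }
  assert (Ha : a = 0).
  { pose proof (cubic_lowest_coef_nonneg _ _ _ _ Hd Hpos).
    pose proof (cubic_lowest_coef_nonneg _ _ _ _ Hd Hneg). lra. }
  subst a. repeat split; [| intros Hb; subst b].
  - apply (cubic_lowest_coef_nonneg b k 0 d Hd). intros s Hs.
    specialize (Hpos s Hs). apply (Rmult_le_reg_l s); [lra |]. nra.
  - pose proof (Hpos (d / 2) ltac:(lra)). pose proof (Hneg (d / 2) ltac:(lra)).
    assert (0 < (d / 2) ^ 3) by (apply pow_lt; lra). nra.
Qed.

Lemma path_in_invariant (S G : R3 -> Prop) (r : R) (m u : R3) : 0 < r ->
  (forall a v, S a -> G a -> S v -> dist3 v a < r -> G v) ->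
  G m -> path_in S m u -> G u.
Proof.
  intros Hr Hspread Hm [g [g0 [g1 [gS gcont]]]].
  set (E := fun t => 0 <= t <= 1 /\ forall s, 0 <= s <= t -> G (g s)).
  assert (E0 : E 0).
  { split; [lra |]. intros s Hs. replace s with 0 by lra. now rewrite g0. }
  destruct (completeness E) as [T [T_ub T_least]].
  { exists 1. intros t [Ht _]. lra. }
  { now exists 0. }
  assert (T_range : 0 <= T <= 1).
  { split; [now apply T_ub | apply T_least; intros t [Ht _]; lra]. }
  destruct (gcont T T_range (r / 2) ltac:(lra)) as [delta [Hdelta Hnear]].
  assert (near_sup : exists t0, E t0 /\ T - delta < t0).
  { apply NNPP. intros Hno. enough (T <= T - delta) by lra.
    apply T_least. intros t Et. apply Rnot_lt_le. intros Ht. apply Hno. now exists t. }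
  destruct near_sup as [t0 [[t0_range Gt0] t0_close]].
  assert (t0_le : t0 <= T) by (apply T_ub; now split).
  assert (G_before : forall s, 0 <= s <= 1 -> s < T + delta -> G (g s)).
  { intros s Hs HsT. destruct (Rle_or_lt s t0) as [Hst | Hst]; [apply Gt0; lra |].
    apply (Hspread (g t0)); [apply gS; lra | apply Gt0; lra | apply gS; lra |].
    pose proof (dist3_triangle (g s) (g T) (g t0)) as Htri.
    rewrite (dist3_sym (g T)) in Htri.
    assert (dist3 (g s) (g T) < r / 2) by (apply Hnear; [lra | apply Rabs_def1; lra]).
    assert (dist3 (g t0) (g T) < r / 2) by (apply Hnear; [lra | apply Rabs_def1; lra]).
    lra. }
  destruct (Rle_or_lt (T + delta / 2) 1) as [Hin | Hout].
  - assert (Hbeyond : E (T + delta / 2)).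
    { split; [lra |]. intros s Hs. apply G_before; lra. }
    pose proof (T_ub _ Hbeyond). lra.
  - rewrite <- g1. apply G_before; lra.
Qed.

Definition monomials3 : list (nat * nat * nat) :=
  [(0,0,0); (1,0,0); (0,1,0); (0,0,1); (2,0,0); (1,1,0); (1,0,1); (0,2,0); (0,1,1); (0,0,2);
   (3,0,0); (2,1,0); (2,0,1); (1,2,0); (1,1,1); (1,0,2); (0,3,0); (0,2,1); (0,1,2); (0,0,3)]%nat.

Definition sum_monomials3 (F : nat -> nat -> nat -> R) : R :=
  fold_right (fun '(i, j, k) s => F i j k + s) 0 monomials3.

Lemma sum3_deg3 (F : nat -> nat -> nat -> R) :
  (forall i j k, (3 < i + j + k)%nat -> F i j k = 0) -> sum3 F = sum_monomials3 F.
Proof.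
  intros HF. unfold sum3, sum_monomials3. simpl.
  repeat match goal with |- context [F ?i ?j ?k] =>
    let h := fresh in assert (h : (3 < i + j + k)%nat) by (simpl; lia); rewrite (HF i j k h); clear h end.
  ring.
Qed.

Definition grad_dot (c : nat -> nat -> nat -> R) (b e : R3) : R :=
  let '(e1, e2, e3) := e in pdx c b * e1 + pdy c b * e2 + pdz c b * e3.

(* For a cubic p, p(b + e) = p(b) + grad p(b).e + Q_b(e) + K(e), where Q_b(e) is half the
   Hessian form at b and K the homogeneous cubic part of p.  The symmetric second difference
   isolates Q_b, and K is the odd part of p minus its linear part. *)
Definition hess_form (c : nat -> nat -> nat -> R) (b e : R3) : R :=
  (peval c (add3 b e) + peval c (sub3 b e)) / 2 - peval c b.

Definition hess_polar (c : nat -> nat -> nat -> R) (b n d : R3) : R :=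
  hess_form c b (add3 n d) - hess_form c b n - hess_form c b d.

Definition cubic_form (c : nat -> nat -> nat -> R) (e : R3) : R :=
  (peval c e - peval c (scal3 (-1) e)) / 2 - grad_dot c (0, 0, 0) e.

Section CubicTaylor.

Variable c : nat -> nat -> nat -> R.
Hypothesis c_deg : deg_le3 c.

Ltac cubic_identity :=
  destruct_R3;
  unfold hess_polar, cubic_form, hess_form, grad_dot, sub3, peval, pdx, pdy, pdz, add3, scal3;
  rewrite !sum3_deg3 by (intros i j k Hijk; rewrite (c_deg i j k Hijk); ring);
  unfold sum_monomials3; simpl; field.

Lemma peval_taylor (b e : R3) (s : R) :
  peval c (add3 b (scal3 s e)) =
  peval c b + s * grad_dot c b e + s ^ 2 * hess_form c b e + s ^ 3 * cubic_form c e.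
Proof. cubic_identity. Qed.

Lemma peval_taylor_sub (b u : R3) :
  peval c u =
  peval c b + grad_dot c b (sub3 u b) + hess_form c b (sub3 u b) + cubic_form c (sub3 u b).
Proof.
  rewrite <- (add3_sub3 b u) at 1. replace (sub3 u b) with (scal3 1 (sub3 u b)) at 1 by r3_ring.
  rewrite peval_taylor. ring.
Qed.

Lemma grad_dot_taylor (b u : R3) :
  grad_dot c u (sub3 u b) =
  grad_dot c b (sub3 u b) + 2 * hess_form c b (sub3 u b) + 3 * cubic_form c (sub3 u b).
Proof. cubic_identity. Qed.

Lemma grad_dot_shift (b n d : R3) (t : R) :
  grad_dot c (add3 b (scal3 t n)) d =
  grad_dot c b d + t * hess_polar c b n d
  + t ^ 2 * (grad_dot c (add3 b n) d - grad_dot c b d - hess_polar c b n d).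
Proof. cubic_identity. Qed.

Lemma hess_form_add (b n d : R3) (t : R) :
  hess_form c b (add3 n (scal3 t d)) =
  hess_form c b n + t * hess_polar c b n d + t ^ 2 * hess_form c b d.
Proof. cubic_identity. Qed.

Lemma hess_form_scal3 (b : R3) (a : R) (n : R3) :
  hess_form c b (scal3 a n) = a ^ 2 * hess_form c b n.
Proof. cubic_identity. Qed.

End CubicTaylor.

Lemma Vgrad_grad_dot (c : nat -> nat -> nat -> R) (b : R3) :
  Vgrad c b <-> forall e, grad_dot c b e = 0.
Proof.
  unfold Vgrad, grad_dot. split.
  - intros (Hx & Hy & Hz) [[e1 e2] e3]. rewrite Hx, Hy, Hz. ring.
  - intros H. pose proof (H (1, 0, 0)). pose proof (H (0, 1, 0)). pose proof (H (0, 0, 1)).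
    repeat split; lra.
Qed.

Definition comb3 (l : list (R * R3)) : R3 :=
  fold_right (fun wv s => add3 (scal3 (fst wv) (snd wv)) s) (0, 0, 0) l.

Definition weight_sum (l : list (R * R3)) : R := fold_right (fun wv s => fst wv + s) 0 l.

Definition local_min_within (c : nat -> nat -> nat -> R) (b : R3) (r : R) : Prop :=
  forall u, dist3 u b < r -> peval c b <= peval c u.

Section LocalMinimum.

Variable c : nat -> nat -> nat -> R.
Hypothesis c_deg : deg_le3 c.

Lemma local_min_taylor_coefs (b : R3) (r : R) (e : R3) : 0 < r -> local_min_within c b r ->
  grad_dot c b e = 0 /\ 0 <= hess_form c b e /\ (hess_form c b e = 0 -> cubic_form c e = 0).
Proof.
  intros Hr Hmin. pose proof (norm3_nonneg e) as He.
  apply (cubic_nonneg_near0 _ _ _ (r / (norm3 e + 1))); [apply Rdiv_lt_0_compat; lra |].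
  intros s Hs.
  assert (Hclose : dist3 (add3 b (scal3 s e)) b < r).
  { rewrite dist3_add3_l, norm3_scal3.
    apply Rmult_lt_compat_r with (r := norm3 e + 1) in Hs; [| lra].
    replace (r / (norm3 e + 1) * (norm3 e + 1)) with r in Hs by (field; lra).
    pose proof (Rabs_pos s). nra. }
  pose proof (Hmin _ Hclose) as Hle. rewrite (peval_taylor c c_deg) in Hle. lra.
Qed.

Lemma local_min_within_shift (b v : R3) (r : R) : local_min_within c b r ->
  dist3 v b < r / 2 -> peval c v = peval c b -> local_min_within c v (r / 2).
Proof.
  intros Hmin Hvb Hpv u Huv. rewrite Hpv. apply Hmin.
  pose proof (dist3_triangle u v b). lra.
Qed.

Variables (m : R3) (r : R).
Hypothesis r_pos : 0 < r.
Hypothesis m_min : local_min_within c m r.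

Lemma grad_dot_min (e : R3) : grad_dot c m e = 0.
Proof. apply (local_min_taylor_coefs m r e r_pos m_min). Qed.

Lemma hess_form_min_nonneg (e : R3) : 0 <= hess_form c m e.
Proof. apply (local_min_taylor_coefs m r e r_pos m_min). Qed.

Lemma cubic_form_hess_kernel (n : R3) : hess_form c m n = 0 -> cubic_form c n = 0.
Proof. apply (local_min_taylor_coefs m r n r_pos m_min). Qed.

Lemma hess_polar_kernel (n d : R3) : hess_form c m n = 0 -> hess_polar c m n d = 0.
Proof.
  intros Hn.
  apply (cubic_nonneg_near0 _ (hess_form c m d) 0 1); [lra |].
  intros t _. pose proof (hess_form_min_nonneg (add3 n (scal3 t d))) as Hnonneg.
  rewrite (hess_form_add c c_deg), Hn in Hnonneg. lra.
Qed.

Lemma hess_kernel_lincomb (a a' : R) (n n' : R3) :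
  hess_form c m n = 0 -> hess_form c m n' = 0 ->
  hess_form c m (add3 (scal3 a n) (scal3 a' n')) = 0.
Proof.
  intros Hn Hn'.
  assert (Ha : hess_form c m (scal3 a n) = 0) by (rewrite (hess_form_scal3 c c_deg), Hn; ring).
  replace (scal3 a' n') with (scal3 1 (scal3 a' n')) by r3_ring.
  rewrite (hess_form_add c c_deg), Ha, (hess_polar_kernel _ _ Ha), (hess_form_scal3 c c_deg), Hn'.
  ring.
Qed.

Lemma peval_hess_kernel (n : R3) (s : R) :
  hess_form c m n = 0 -> peval c (add3 m (scal3 s n)) = peval c m.
Proof.
  intros Hn. rewrite (peval_taylor c c_deg), grad_dot_min, Hn, (cubic_form_hess_kernel _ Hn). ring.
Qed.

Lemma hess_kernel_critical (n : R3) : hess_form c m n = 0 -> Vgrad c (add3 m n).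
Proof.
  intros Hn. pose proof (norm3_nonneg n) as Hnorm.
  set (t := r / (2 * (norm3 n + 1))).
  assert (Ht : 0 < t) by (apply Rdiv_lt_0_compat; lra).
  set (v := add3 m (scal3 t n)).
  assert (Hvm : dist3 v m < r / 2).
  { unfold v. rewrite dist3_add3_l, norm3_scal3, Rabs_right by lra.
    unfold t. apply (Rmult_lt_reg_r (2 * (norm3 n + 1))); [lra |]. field_simplify; lra. }
  assert (v_min : local_min_within c v (r / 2))
    by exact (local_min_within_shift m v r m_min Hvm (peval_hess_kernel n t Hn)).
  apply Vgrad_grad_dot. intros d.
  destruct (local_min_taylor_coefs v (r / 2) d ltac:(lra) v_min) as [Hv _].
  unfold v in Hv. rewrite (grad_dot_shift c c_deg), grad_dot_min, (hess_polar_kernel _ _ Hn) in Hv.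
  assert (0 < t ^ 2) by (apply pow_lt; lra).
  nra.
Qed.

Lemma hess_kernel_spreads (a u : R3) :
  hess_form c m (sub3 a m) = 0 -> Vgrad c u -> dist3 u a < r / 2 ->
  hess_form c m (sub3 u m) = 0.
Proof.
  intros Ha Hu Hua.
  assert (Da : forall d, grad_dot c a d = 0).
  { apply Vgrad_grad_dot. rewrite <- (add3_sub3 m a). now apply hess_kernel_critical. }
  assert (Du : forall d, grad_dot c u d = 0) by now apply Vgrad_grad_dot.
  assert (Hpa : peval c a = peval c m).
  { rewrite (peval_taylor_sub c c_deg m a), grad_dot_min, Ha, (cubic_form_hess_kernel _ Ha). ring. }
  pose proof (peval_taylor_sub c c_deg m u) as Pmu.
  pose proof (peval_taylor_sub c c_deg a u) as Pau.
  pose proof (grad_dot_taylor c c_deg m u) as Dmu.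
  pose proof (grad_dot_taylor c c_deg a u) as Dau.
  rewrite grad_dot_min in Pmu, Dmu. rewrite Da in Pau, Dau. rewrite Du in Dmu, Dau.
  assert (Hsplit : hess_form c m (sub3 u m) = hess_form c m (sub3 u a)).
  { replace (sub3 u m) with (add3 (sub3 a m) (scal3 1 (sub3 u a))) by r3_ring.
    rewrite (hess_form_add c c_deg), Ha, (hess_polar_kernel _ _ Ha). ring. }
  assert (Hdouble : 0 <= 4 * hess_form c m (sub3 u a) + 8 * cubic_form c (sub3 u a)).
  { assert (Hclose : dist3 (add3 m (scal3 2 (sub3 u a))) m < r).
    { rewrite dist3_add3_l, norm3_scal3, <- dist3_norm3, Rabs_right by lra. lra. }
    pose proof (m_min _ Hclose) as Hle.
    rewrite (peval_taylor c c_deg), grad_dot_min in Hle. lra. }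
  (* The four expansions and Hpa give 2 Q(u - a) + 3 K(u - a) = 0, so Hdouble reads
     -4/3 Q(u - a) >= 0. *)
  pose proof (hess_form_min_nonneg (sub3 u a)).
  lra.
Qed.

Lemma hess_kernel_affine_comb (C : R3 -> Prop) (l : list (R * R3)) :
  (forall v, C v -> hess_form c m (sub3 v m) = 0) -> Forall (fun wv => C (snd wv)) l ->
  hess_form c m (sub3 (comb3 l) (scal3 (weight_sum l) m)) = 0.
Proof.
  intros HC. induction 1 as [| [w v] l Hv _ IH]; cbn [comb3 weight_sum fold_right fst snd] in *.
  - replace (sub3 (0, 0, 0) (scal3 0 m)) with (scal3 0 m) by r3_ring.
    rewrite (hess_form_scal3 c c_deg). ring.
  - fold (comb3 l) (weight_sum l).
    replace (sub3 (add3 (scal3 w v) (comb3 l)) (scal3 (w + weight_sum l) m))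
      with (add3 (scal3 w (sub3 v m)) (scal3 1 (sub3 (comb3 l) (scal3 (weight_sum l) m))))
      by r3_ring.
    apply hess_kernel_lincomb; [apply HC |]; assumption.
Qed.

Theorem aff_path_component_critical (u : R3) :
  aff (path_component (Vgrad c) m) u -> Vgrad c u.
Proof.
  intros [l [Hl [Hw Hu]]].
  assert (Hcomp : forall v, path_component (Vgrad c) m v -> hess_form c m (sub3 v m) = 0).
  { intros v [_ Hpath].
    apply (path_in_invariant (Vgrad c) (fun v => hess_form c m (sub3 v m) = 0) (r / 2) m v);
      [lra | | | exact Hpath].
    - intros a a' _ Ha Ha' Hclose. now apply (hess_kernel_spreads a a').
    - replace (sub3 m m) with (scal3 0 m) by r3_ring. rewrite (hess_form_scal3 c c_deg). ring. }
  pose proof (hess_kernel_affine_comb _ l Hcomp Hl) as Hker.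
  change (weight_sum l = 1) in Hw. change (u = comb3 l) in Hu.
  rewrite Hw, <- Hu in Hker. replace (sub3 u (scal3 1 m)) with (sub3 u m) in Hker by r3_ring.
  rewrite <- (add3_sub3 m u). now apply hess_kernel_critical.
Qed.

End LocalMinimum.

Definition opp_coef (c : nat -> nat -> nat -> R) (i j k : nat) : R := - c i j k.

Lemma deg_le3_opp (c : nat -> nat -> nat -> R) : deg_le3 c -> deg_le3 (opp_coef c).
Proof. intros Hc i j k Hijk. unfold opp_coef. rewrite (Hc i j k Hijk). ring. Qed.

Lemma sum3_opp (F G : nat -> nat -> nat -> R) :
  (forall i j k, G i j k = - F i j k) -> sum3 G = - sum3 F.
Proof. intros HG. unfold sum3. simpl. rewrite !HG. ring. Qed.

Lemma peval_opp (c : nat -> nat -> nat -> R) (u : R3) : peval (opp_coef c) u = - peval c u.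
Proof. destruct u as [[x y] z]. apply sum3_opp. intros. unfold opp_coef. ring. Qed.

Lemma Vgrad_opp (c : nat -> nat -> nat -> R) : Vgrad (opp_coef c) = Vgrad c.
Proof.
  apply functional_extensionality. intros [[x y] z].
  apply propositional_extensionality. unfold Vgrad.
  assert (Hx : pdx (opp_coef c) (x, y, z) = - pdx c (x, y, z))
    by (apply sum3_opp; intros; unfold opp_coef; ring).
  assert (Hy : pdy (opp_coef c) (x, y, z) = - pdy c (x, y, z))
    by (apply sum3_opp; intros; unfold opp_coef; ring).
  assert (Hz : pdz (opp_coef c) (x, y, z) = - pdz c (x, y, z))
    by (apply sum3_opp; intros; unfold opp_coef; ring).
  rewrite Hx, Hy, Hz. split; intros (? & ? & ?); repeat split; lra.
Qed.

Theorem lemma4p2 (c : nat -> nat -> nat -> R) (m : R3) :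
  deg_le3 c ->
  Vgrad c m ->
  local_extremum c m ->
  forall u : R3, aff (path_component (Vgrad c) m) u -> Vgrad c u.
Proof.
  intros Hdeg _ [[r [Hr Hmin]] | [r [Hr Hmax]]].
  - exact (aff_path_component_critical c Hdeg m r Hr Hmin).
  - rewrite <- Vgrad_opp.
    apply (aff_path_component_critical (opp_coef c) (deg_le3_opp c Hdeg) m r Hr).
    intros u Hu. rewrite !peval_opp. specialize (Hmax u Hu). lra.
Qed.
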